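(* Let $\varepsilon\in(0,1]$, $n\ge1$, and let $W$ be a random channel drawn from $\mathcal{W}_{Q,\varepsilon}$. With probability at least $3/4$, every bipartite independent set $(A,B)$ of $G_{W,n}$ satisfies $$\frac1n\log_2(|A||B|)\le q+\log_2\frac{3}{\varepsilon}.$$
   Context: Fix an integer $q\ge1$, $Q=2^q$, $[Q]=\{1,\dots,Q\}$, and a symbol $\phi\notin[Q]$. $\mathcal{W}_{Q,\varepsilon}$ is the distribution over functions $W:[Q]^2\to([Q]\cup\{\phi\})^2$ in which, independently for every $(x,y)\in[Q]^2$, $W(x,y)=(\phi,\phi)$ with probability $\varepsilon$ and $W(x,y)=(x,y)$ otherwise. $G_{W,n}$ is the bipartite graph whose two sides are two copies of $[Q]^n$, with $x^{(n)}=(x_1,\dots,x_n)$ (left) adjacent to $y^{(n)}=(y_1,\dots,y_n)$ (right) iff there is an index $i$ with $W(x_i,y_i)=(\phi,\phi)$. In a bipartite graph with sides $X,Y$, a bipartite independent set (BPIS) is a pair $(A,B)$ with $A\subseteq X$, $B\subseteq Y$ and no edge between $A$ and $B$; its size is $|A|\cdot|B|$. *)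

From mathcomp Require Import all_boot.
From Stdlib Require Import Reals.
Set Implicit Arguments. Unset Strict Implicit. Unset Printing Implicit Defensive.

(* [Q] is modelled by 'I_Q (labels 0..Q-1); phi is None. *)
Definition sym (Q : nat) := option 'I_Q.

Definition channel (Q : nat) := {ffun 'I_Q * 'I_Q -> sym Q * sym Q}.

(* Probability of a channel under W_{Q,eps}: independently for each (x,y),
   W(x,y) = (phi,phi) w.p. eps and W(x,y) = (x,y) otherwise. *)
Definition chan_prob (Q : nat) (eps : R) (W : channel Q) : R :=
  \big[Rmult/1%R]_(xy : 'I_Q * 'I_Q)
    (if W xy == (None, None) then eps
     else if W xy == (Some xy.1, Some xy.2) then (1 - eps)%R else 0%R).

Definition word (Q n : nat) := {ffun 'I_n -> 'I_Q}.

Definition adj (Q n : nat) (W : channel Q) (x y : word Q n) : Prop :=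
  exists i : 'I_n, W (x i, y i) = (None, None).

Definition is_BPIS (Q n : nat) (W : channel Q) (A B : {set word Q n}) : Prop :=
  forall x y, x \in A -> y \in B -> ~ adj W x y.

Definition log2 (x : R) : R := (ln x / ln 2)%R.

From mathcomp Require Import all_boot.
From Stdlib Require Import Reals Lra.
From mathcomp Require Import all_order all_algebra Rstruct zify.
Import GRing.Theory Num.Theory Order.TTheory.
Set Implicit Arguments. Unset Strict Implicit. Unset Printing Implicit Defensive.

(* Put Q = 2^q and K = 3Q/eps.  Call a rectangle S x T of input pairs large
   when |S||T| > K, and call W good when it erases at least one pair of every
   large rectangle.
   - Probabilistic part: under W_{Q,eps} the pairs are erased independently,
     so a fixed rectangle of m pairs is erasure-free with probability
     (1 - eps)^m <= e^(-eps m) < e^(-3Q) when it is large.  A union bound over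
     the 4^Q rectangles, with 4 * 4^Q <= e^(3Q), shows that W is good with
     probability at least 3/4.
   - Deterministic part: if (A, B) is a BPIS of G_{W,n}, then for each
     coordinate i the rectangle A_i x B_i of i-th letters is erasure-free, so
     |A_i||B_i| <= K when W is good, and |A||B| <= prod_i |A_i||B_i| <= K^n.
   Taking log2 and dividing by n gives the bound q + log2(3/eps). *)

(* Restore %R as the delimiter of Stdlib real numbers, as in the statement. *)
Delimit Scope R_scope with R.

Section ErasureChannel.
Variables (Q : nat) (eps : R).
Local Open Scope ring_scope.

Definition erasure_weight (xy : 'I_Q * 'I_Q) (v : sym Q * sym Q) : R :=
  if v == (None, None) then eps
  else if v == (Some xy.1, Some xy.2) then 1 - eps else 0.

Lemma chan_probE (W : channel Q) :
  chan_prob eps W = \prod_xy erasure_weight xy (W xy).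
Proof. by []. Qed.

Definition erasure_free (W : channel Q) (E : {set 'I_Q * 'I_Q}) : bool :=
  [forall xy in E, W xy != (None, None)].

(* Summing over channels factorises
   into a product, over input pairs, of sums over outputs. *)
Lemma prob_erasure_free (E : {set 'I_Q * 'I_Q}) :
  \sum_(W : channel Q | erasure_free W E) chan_prob eps W = (1 - eps) ^+ #|E|.
Proof.
pose w xy v := if (xy \in E) && (v == (None, None)) then 0
               else erasure_weight xy v.
have restrictE W :
    (if erasure_free W E then chan_prob eps W else 0) = \prod_xy w xy (W xy).
  rewrite chan_probE; case: ifP => [/forallP freeW | /negbT].
    apply: eq_bigr => xy _; rewrite /w.
    by case: (boolP (xy \in E)) => //= xyE; rewrite (negbTE (implyP (freeW xy) xyE)).
  rewrite negb_forall => /existsP [xy]; rewrite negb_imply negbK.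
  by case/andP=> xyE /eqP Wxy; rewrite (bigD1 xy) //= /w xyE Wxy eqxx mul0r.
have outputs_sum xy : \sum_v w xy v = if xy \in E then 1 - eps else 1.
  rewrite (bigD1 (None, None)) //= (bigD1 (Some xy.1, Some xy.2)) //= big1.
    rewrite /w /erasure_weight /= !eqxx addr0.
    by case: (xy \in E); rewrite /= ?add0r // addrC subrK.
  by move=> v /andP [vN vS]; rewrite /w /erasure_weight (negbTE vN) (negbTE vS) andbF.
rewrite big_mkcond /=; under eq_bigr do rewrite restrictE.
rewrite -(bigA_distr_bigA w); under eq_bigr do rewrite outputs_sum.
by rewrite -big_mkcond prodr_const.
Qed.

Lemma chan_prob_total : \sum_(W : channel Q) chan_prob eps W = 1.
Proof.
rewrite -(expr0 (1 - eps)) -(cards0 ('I_Q * 'I_Q)%type) -prob_erasure_free.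
by apply: eq_bigl => W; symmetry; apply/forallP => xy; rewrite inE.
Qed.

Hypothesis eps01 : 0 <= eps <= 1.

Lemma chan_prob_ge0 (W : channel Q) : 0 <= chan_prob eps W.
Proof.
case/andP: eps01 => eps0 eps1; rewrite chan_probE; apply: prodr_ge0 => xy _.
by rewrite /erasure_weight; do 2 case: ifP => // _; rewrite subr_ge0.
Qed.

Definition large_rect (K : R) : {set {set 'I_Q} * {set 'I_Q}} :=
  [set ST : {set 'I_Q} * {set 'I_Q} | K < (#|ST.1| * #|ST.2|)%:R].

Definition good_channels (K : R) : {set channel Q} :=
  [set W : channel Q | [forall ST in large_rect K, ~~ erasure_free W (setX ST.1 ST.2)]].

(* Union bound: a channel is bad iff some large rectangle is erasure-free. *)
Lemma prob_not_good_le (K : R) :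
  \sum_(W | W \notin good_channels K) chan_prob eps W <=
  \sum_(ST in large_rect K) (1 - eps) ^+ (#|ST.1| * #|ST.2|).
Proof.
under [X in _ <= X]eq_bigr => ST _ do
  rewrite -cardsX -prob_erasure_free big_mkcond /=.
rewrite exchange_big /= big_mkcond /=; apply: ler_sum => W _.
have term_ge0 (ST : {set 'I_Q} * {set 'I_Q}) :
    0 <= (if erasure_free W (setX ST.1 ST.2) then chan_prob eps W else 0).
  by case: ifP => // _; apply: chan_prob_ge0.
case: ifP => [|_]; last by apply: sumr_ge0 => ST _; apply: term_ge0.
rewrite inE negb_forall => /existsP [ST]; rewrite negb_imply negbK => /andP [STl free].
by rewrite (bigD1 ST) //= free lerDl; apply: sumr_ge0 => ST' _; apply: term_ge0.
Qed.

(* If each large rectangle is erasure-free with probability at most c, the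
   union bound is at most c times the number 4^Q of rectangles. *)
Lemma sum_large_rect_le (K c : R) :
  (forall ST, ST \in large_rect K -> (1 - eps) ^+ (#|ST.1| * #|ST.2|) <= c) ->
  0 <= c ->
  \sum_(ST in large_rect K) (1 - eps) ^+ (#|ST.1| * #|ST.2|) <= (expn 4 Q)%:R * c.
Proof.
move=> term_le c0.
have -> : (expn 4 Q)%:R * c = \sum_(ST : {set 'I_Q} * {set 'I_Q}) c.
  rewrite sumr_const card_prod -cardsT -powersetT card_powerset cardsT card_ord.
  by rewrite -expnMn mulr_natl.
rewrite [X in _ <= X](bigID (mem (large_rect K))) /=.
by rewrite -[X in X <= _]addr0 lerD ?ler_sum ?sumr_ge0.
Qed.

End ErasureChannel.

Section Estimates.
Local Open Scope R_scope.

Lemma exp_pow (a : R) (k : nat) : exp a ^ k = exp (a * INR k).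
Proof. by rewrite RpowE expRX INRE RmultE mulr_natr. Qed.

(* An erasure-free rectangle of m pairs has probability (1 - eps)^m, which
   is at most exp(-a) as soon as eps m > a, since 1 - eps <= exp(-eps). *)
Lemma erasure_free_rect_le (eps a : R) (m : nat) :
  0 < eps <= 1 -> a < eps * INR m -> (1 - eps) ^ m <= exp (- a).
Proof.
intros [eps0 eps1] large.
apply Rle_trans with (exp (- eps) ^ m).
- apply pow_incr; pose proof (exp_ineq1_le (- eps)); lra.
- rewrite exp_pow; left; apply exp_increasing; lra.
Qed.

Lemma rect_count_le (Q : nat) : (2 <= Q)%nat -> (4 * expn 4 Q <= expn 2 (3 * Q))%nat.
Proof.
move=> Q2; rewrite (_ : 4%nat = expn 2 2) // -expnM -expnD.
by apply: leq_pexp2l => //; lia.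
Qed.

Lemma rect_count_le_exp (Q : nat) : (2 <= Q)%nat -> 4 * INR (expn 4 Q) <= exp (3 * INR Q).
Proof.
move=> Q2.
have two_le_e : 2 <= exp 1 by pose proof (exp_ineq1 1); lra.
apply Rle_trans with (INR (expn 2 (3 * Q))).
- rewrite -[4](INR_IZR_INZ 4) -mult_INR; apply le_INR; apply/ssrnat.leP.
  exact: rect_count_le.
- have -> : 3 * INR Q = 1 * INR (3 * Q) by rewrite mult_INR; simpl; ring.
  rewrite -exp_pow INRE natrX -INRE -RpowE; apply pow_incr; simpl; lra.
Qed.

End Estimates.

Section GoodChannels.
Local Open Scope ring_scope.

(* With K = 3Q/eps, a large rectangle is erasure-free with probability at
   most e^(-3Q) and there are 4^Q <= e^(3Q)/4 rectangles, so the bad channels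
   have probability at most 1/4. *)
Lemma prob_good_channels (Q : nat) (eps : R) : (2 <= Q)%nat -> (0 < eps <= 1)%R ->
  (3 / 4 <= \big[Rplus/0]_(W in good_channels Q (INR Q * (3 / eps))) chan_prob eps W)%R.
Proof.
move=> Q2 [eps0 eps1]; set K := (INR Q * (3 / eps))%R; set G := good_channels Q K.
have eps01 : 0 <= eps <= 1.
  by apply/andP; split; apply/RleP; [rewrite -R0E | rewrite -R1E]; lra.
have term_le ST : ST \in large_rect Q K ->
    (1 - eps) ^+ (#|ST.1| * #|ST.2|) <= exp (- (3 * INR Q))%R.
  rewrite inE -INRE => /RltP large; apply/RleP; rewrite -RpowE.
  apply: erasure_free_rect_le => //; rewrite /K in large.
  have -> : (3 * INR Q = eps * (INR Q * (3 / eps)))%R by field; lra.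
  by apply: Rmult_lt_compat_l.
have bad_le : (\big[Rplus/0]_(W | W \notin G) chan_prob eps W <=
               INR (expn 4 Q) * exp (- (3 * INR Q)))%R.
  apply/RleP; rewrite INRE RmultE; apply: le_trans (prob_not_good_le Q eps01 K) _.
  by apply: sum_large_rect_le => //; apply/RleP; apply: Rlt_le; apply: exp_pos.
have total : (\big[Rplus/0]_(W in G) chan_prob eps W +
              \big[Rplus/0]_(W | W \notin G) chan_prob eps W = 1)%R.
  by move: (chan_prob_total Q eps); rewrite (bigID (mem G)).
have few_rects : (INR (expn 4 Q) * exp (- (3 * INR Q)) <= / 4)%R.
  have count := rect_count_le_exp Q2; have e_pos := exp_pos (3 * INR Q).
  rewrite exp_Ropp; apply (Rmult_le_reg_r (exp (3 * INR Q))) => //.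
  rewrite Rmult_assoc Rinv_l; lra.
lra.
Qed.

End GoodChannels.

Section IndependentSets.
Local Open Scope ring_scope.

Definition coord_proj (I T : finType) (A : {set {ffun I -> T}}) (i : I) : {set T} :=
  [set x i | x : {ffun I -> T} in A].

(* A set of functions lies in the product of its coordinate projections. *)
Lemma card_le_prod_proj (I T : finType) (A : {set {ffun I -> T}}) :
  (#|A| <= \prod_i #|coord_proj A i|)%nat.
Proof.
have A_sub : A \subset finfun.family (fun i => mem (coord_proj A i)).
  by apply/subsetP => x xA; apply/familyP => i; apply/imsetP; exists x.
apply: leq_trans (subset_leq_card A_sub) _.
by rewrite card_family foldrE big_map big_enum.
Qed.

Variables (Q : nat) (W : channel Q).

Lemma bpis_proj_erasure_free (n : nat) (A B : {set word Q n}) (i : 'I_n) :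
  is_BPIS W A B -> erasure_free W (setX (coord_proj A i) (coord_proj B i)).
Proof.
move=> indep; apply/forallP => -[a b]; apply/implyP; rewrite inE /=.
case/andP=> /imsetP [x xA ->] /imsetP [y yB ->].
by apply/eqP => erased; apply: (indep x y xA yB); exists i.
Qed.

Lemma good_rect_le (K : R) (S T : {set 'I_Q}) :
  W \in good_channels Q K -> erasure_free W (setX S T) -> (#|S| * #|T|)%:R <= K.
Proof.
rewrite inE => /forallP /(_ (S, T)) /implyP good free.
by rewrite leNgt; apply: contraL free => large; apply: good; rewrite inE.
Qed.

(* Hence a BPIS of G_{W,n} for a good W has |A||B| <= prod_i |A_i||B_i| <= K^n. *)
Lemma bpis_card_le (K : R) (n : nat) (A B : {set word Q n}) :
  W \in good_channels Q K -> is_BPIS W A B -> 0 <= K -> (#|A| * #|B|)%:R <= K ^+ n.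
Proof.
move=> good indep K0.
apply: le_trans (_ : (\prod_i (#|coord_proj A i| * #|coord_proj B i|))%:R <= _).
  by rewrite ler_nat big_split /= leq_mul // card_le_prod_proj.
have -> : K ^+ n = \prod_(i < n) K by rewrite prodr_const card_ord.
rewrite natr_prod.
apply: ler_prod => i _; rewrite ler0n; apply: good_rect_le good _.
exact: bpis_proj_erasure_free.
Qed.

End IndependentSets.

Section Logarithms.
Local Open Scope R_scope.

Lemma ln_le (x y : R) : 0 < x -> x <= y -> ln x <= ln y.
Proof. by move=> x0; case=> [xy | ->]; [left; apply: ln_increasing | right]. Qed.

(* The library extends ln by ln x = 0 for x <= 0; we only need ln 0 = 0. *)
Lemma ln_0 : ln 0 = 0.
Proof. by rewrite /ln; case: (Rlt_dec 0 0) => // lt00; case: (Rlt_irrefl 0 lt00). Qed.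

(* If P <= K^n with K >= 1, then log2 P / n <= log2 K (also for P = 0). *)
Lemma log2_pow_bound (P n : nat) (K : R) :
  (0 < n)%nat -> 1 <= K -> INR P <= K ^ n -> / INR n * log2 (INR P) <= log2 K.
Proof.
move=> n0 K1 PK.
have ln2_pos : 0 < ln 2 by rewrite -ln_1; apply: ln_increasing; lra.
have n_pos : 0 < INR n by apply: lt_0_INR; apply/ssrnat.ltP.
have lnK_ge0 : 0 <= ln K by rewrite -ln_1; apply: ln_le; lra.
rewrite /log2 /Rdiv -Rmult_assoc; apply: Rmult_le_compat_r.
  by left; apply: Rinv_0_lt_compat.
case: P PK => [_ | P PK]; first by rewrite /= ln_0 Rmult_0_r.
have lnP_le : ln (INR P.+1) <= INR n * ln K.
  by rewrite -ln_pow; [apply: ln_le => //; apply: lt_0_INR; lia | lra].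
apply: (Rmult_le_reg_l (INR n)) => //.
by rewrite -Rmult_assoc Rinv_r; lra.
Qed.

Lemma log2_pow2_mult (q : nat) (c : R) : 0 < c -> log2 (INR (Nat.pow 2 q) * c) = INR q + log2 c.
Proof.
move=> c0; have two_pos : 0 < 2 by lra.
have ln2_pos : 0 < ln 2 by rewrite -ln_1; apply: ln_increasing; lra.
have INR2 : INR 2 = 2 by rewrite /=; lra.
rewrite /log2 pow_INR INR2 ln_mult ?ln_pow //; last exact: pow_lt.
by field; lra.
Qed.

End Logarithms.

Theorem proposition2 (q : nat) (eps : R) (n : nat) :
  (1 <= q)%N -> (0 < eps <= 1)%R -> (1 <= n)%N ->
  exists G : {set channel (2 ^ q)},
    (forall W, W \in G ->
       forall A B : {set word (2 ^ q) n}, is_BPIS W A B ->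
         (/ INR n * log2 (INR (#|A| * #|B|)) <= INR q + log2 (3 / eps))%R) /\
    (3 / 4 <= \big[Rplus/0%R]_(W in G) chan_prob eps W)%R.
Proof.
move=> q1 [eps0 eps1] n1.
have Q2 : (2 <= Nat.pow 2 q)%nat.
  apply/ssrnat.leP; rewrite -[2%coq_nat]/(Nat.pow 2 1).
  by apply: Nat.pow_le_mono_r => //; apply/ssrnat.leP.
have c3 : (3 <= 3 / eps)%R.
  apply: (Rmult_le_reg_r eps) => //; rewrite /Rdiv Rmult_assoc Rinv_l; lra.
set K := (INR (Nat.pow 2 q) * (3 / eps))%R.
have K1 : (1 <= K)%R.
  have : (1 <= INR (Nat.pow 2 q))%R by apply: (le_INR 1); apply/ssrnat.leP; lia.
  rewrite /K; nra.
exists (good_channels (Nat.pow 2 q) K); split; last exact: prob_good_channels.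
move=> W good A B indep.
rewrite -log2_pow2_mult; last lra.
apply: log2_pow_bound => //.
have K0 : (0 <= K)%R by lra.
by move: (bpis_card_le good indep (introT RleP K0)) => /RleP; rewrite -INRE -RpowE.
Qed.
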